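(* The following two statements are equivalent: (i) for every Ferrers diagram $\mathcal D$, every positive integer $d$ and every finite field $\mathbb F$, there exists a $[\mathcal D,\nu_{\min}(\mathcal D,d),d]_{\mathbb F}$ code (i.e. an MFD code); (ii) for every irreducible pair $(\mathcal D,d)$ (with $\mathcal D$ a Ferrers diagram and $d$ a positive integer) and every finite field $\mathbb F$, there exists a $[\mathcal D,\nu_{\min}(\mathcal D,d),d]_{\mathbb F}$ code.
   Context: Let $\mathbb N=\{1,2,\dots\}$ and $[n]=\{1,\dots,n\}$. A Ferrers diagram is a finite subset $\mathcal D\subseteq\mathbb N^2$ such that $(x,y)\in\mathcal D$ implies $(i,j)\in\mathcal D$ for all $i\in[x]$, $j\in[y]$ (the first coordinate is the row, the second the column); it has order $n$ if $\mathcal D\subseteq[n]^2$. Its column heights are $c_i=|\mathcal D\cap(\mathbb N\times\{i\})|$. For a positive integer $d$ and $0\le j\le d-1$ let $\nu_j(\mathcal D,d)=\sum_{i\ge j+1}\max\{0,c_i-d+j\}$ (equivalently, the number of $(x,y)\in\mathcal D$ with $x\ge d-j$ and $y\ge j+1$), and $\nu_{\min}(\mathcal D,d)=\min_{0\le j\le d-1}\nu_j(\mathcal D,d)$. For a finite field $\mathbb F$ and $\mathcal D$ of order $n$, $\mathbb F^{\mathcal D}$ is the space of $n\times n$ matrices over $\mathbb F$ with entry $m_{ij}=0$ whenever $(i,j)\notin\mathcal D$. A $[\mathcal D,k,d]_{\mathbb F}$ code is a $k$-dimensional $\mathbb F$-subspace of $\mathbb F^{\mathcal D}$ whose nonzero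 elements have minimum rank $d$; it is an MFD code if $k=\nu_{\min}(\mathcal D,d)$. A point $P\in\mathcal D$ is removable if $\mathcal D\setminus\{P\}$ is a Ferrers diagram. For Ferrers diagrams $\mathcal D$ and $\mathcal D'=\mathcal D\setminus\{P\}$ with $P$ removable, write $\mathcal D'\xrightarrow{d}\mathcal D$ if $\nu_{\min}(\mathcal D',d)=\nu_{\min}(\mathcal D,d)$, and $\mathcal D\xrightarrow{d}\mathcal D'$ otherwise. The pair $(\mathcal D,d)$ is reducible if there is a Ferrers diagram $\mathcal D'$ (of any order) with $\mathcal D'\xrightarrow{d}\mathcal D$, and irreducible otherwise. *)

From HB Require Import structures.
From mathcomp Require Import all_boot all_order all_algebra all_field.
From mathcomp Require Import finmap.
Set Implicit Arguments. Unset Strict Implicit. Unset Printing Implicit Defensive.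
Import GRing.Theory.
Local Open Scope fset_scope.

(* A diagram is a finite set of points (row, column) of N^2, 1-indexed. *)
Definition diagram := {fset (nat * nat)}.

Definition ferrers (D : diagram) : Prop :=
  (forall p, p \in D -> (1 <= p.1)%N /\ (1 <= p.2)%N) /\
  (forall p, p \in D -> forall i j : nat,
      (1 <= i <= p.1)%N -> (1 <= j <= p.2)%N -> (i, j) \in D).

Definition of_order (n : nat) (D : diagram) : Prop :=
  forall p, p \in D -> (p.1 <= n)%N /\ (p.2 <= n)%N.

Definition nu (D : diagram) (d j : nat) : nat :=
  #|` [fset p in D | (d - j <= p.1)%N && (j.+1 <= p.2)%N] |.

Definition numin (D : diagram) (d : nat) : nat :=
  \big[minn/nu D d 0]_(j < d) nu D d j.

Definition removable (D : diagram) (P : nat * nat) : Prop :=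
  P \in D /\ ferrers (D `\ P).

Definition arrow (d : nat) (D1 D2 : diagram) : Prop :=
  (exists P, removable D2 P /\ D1 = D2 `\ P /\ numin D1 d = numin D2 d) \/
  (exists P, removable D1 P /\ D2 = D1 `\ P /\ numin D2 d <> numin D1 d).

Definition reducible (D : diagram) (d : nat) : Prop :=
  exists D', ferrers D' /\ arrow d D' D.

Definition irreducible (D : diagram) (d : nat) : Prop := ~ reducible D d.

(* M belongs to F^D (0-indexed ordinals i,j correspond to row i+1, col j+1). *)
Definition supported_in (F : fieldType) (n : nat) (D : diagram)
  (M : 'M[F]_n) : Prop :=
  forall i j : 'I_n, (i.+1, j.+1) \notin D -> M i j = 0%R.

Definition is_code (F : fieldType) (n : nat) (D : diagram) (k d : nat)
  (C : {vspace 'M[F]_n}) : Prop :=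
  \dim C = k /\
  (forall M, M \in C -> supported_in D M) /\
  (forall M, M \in C -> M != 0%R -> (d <= \rank M)%N).

(* Only (ii) => (i) needs work.  For d = 1 the space of all matrices supported
   on D is an MFD code.  For d >= 2 let c = |D| - nu_min(D,d) be the defect of D.
   Every cell of a Ferrers diagram lies in [c]^2, because the first row avoids
   the cells counted by nu_0 and the first column those counted by nu_(d-1);
   hence |D| <= c^2.  Fix N >= c and build MFD codes of D inside N x N matrices
   by induction on (c, c^2 - |D|): an irreducible D has order N and (ii)
   applies; if D minus a point P has the same nu_min, it has smaller defect and
   its code is one for D; otherwise D = D' minus P with nu_min(D') =
   nu_min(D) + 1, so D' has the same defect and more cells, and the kernel of
   the entry at P in a code for D' contains a code for D.  Finally, an
   N x N code supported in [n]^2 is carried injectively and rank-preservingly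
   to its leading n x n submatrices. *)

From HB Require Import structures.
From mathcomp Require Import all_boot all_order all_algebra all_field.
From mathcomp Require Import finmap.
From mathcomp Require Import zify.
From Stdlib Require Import Classical_Prop.
Set Implicit Arguments. Unset Strict Implicit. Unset Printing Implicit Defensive.
Import GRing.Theory.
Local Open Scope fset_scope.

(* [minn] has no unit on [nat], but [bigD1] only needs a commutative semigroup. *)
HB.instance Definition _ := SemiGroup.isComLaw.Build nat minn minnA minnC.

Lemma numin_le_nu D d j : (j < d)%N -> (numin D d <= nu D d j)%N.
Proof. by move=> lt_jd; rewrite /numin (bigD1 (Ordinal lt_jd)) //= geq_minl. Qed.

Lemma numin_leq_add D E d k :
  (forall j, nu D d j <= nu E d j + k)%N -> (numin D d <= numin E d + k)%N.
Proof.
by move=> leDE; apply: (big_ind2 (fun a b => a <= b + k)%N) => // *; lia.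
Qed.

Lemma nu_le_card D d j : (nu D d j <= #|` D|)%N.
Proof. by apply: fsubset_leq_card; apply/fsubsetP => p; rewrite inE => /andP[]. Qed.

Lemma numin_le_card D d : (0 < d)%N -> (numin D d <= #|` D|)%N.
Proof. by move=> d_gt0; rewrite (leq_trans (numin_le_nu D d_gt0)) ?nu_le_card. Qed.

Lemma nu_subset D E d j : D `<=` E -> (nu D d j <= nu E d j)%N.
Proof.
move=> /fsubsetP sDE; apply: fsubset_leq_card; apply/fsubsetP => p.
by rewrite !inE => /andP[/sDE -> ->].
Qed.

Lemma nu_fsetD1 D P d j : (nu D d j <= nu (D `\ P) d j + 1)%N.
Proof.
rewrite /nu; set A := [fset p in D | _].
have -> : [fset p in D `\ P | (d - j <= p.1) && (j < p.2)] = A `\ P.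
  by apply/fsetP => p; rewrite !inE -!andbA.
by rewrite (cardfsD1 P) addnC leq_add2l leq_b1.
Qed.

Lemma numin_subset D E d : D `<=` E -> (numin D d <= numin E d)%N.
Proof. by move=> sDE; rewrite -[numin E d]addn0 numin_leq_add // => j; rewrite addn0 nu_subset. Qed.

Lemma numin_fsetD1 D P d : (numin D d <= numin (D `\ P) d + 1)%N.
Proof. exact/numin_leq_add/nu_fsetD1. Qed.

Lemma numin1 D : ferrers D -> numin D 1 = #|` D|.
Proof.
move=> [D_pos _]; apply/eqP; rewrite eqn_leq numin_le_card //=.
rewrite /numin big_ord_recl big_ord0 minnn /nu; apply: fsubset_leq_card; apply/fsubsetP => p pD.
by rewrite !inE pD; have [-> ->] := D_pos p pD.
Qed.

Lemma size_le_card_sub_nu E d j (s : seq (nat * nat)) :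
  uniq s -> {subset s <= E} -> (forall p, p \in s -> (p.1 < d - j) || (p.2 <= j))%N ->
  (size s <= #|` E| - nu E d j)%N.
Proof.
move=> s_uniq sE s_out; rewrite /nu -cardfsDS; last first.
  by apply/fsubsetP => p; rewrite inE => /andP[].
apply: uniq_leq_size s_uniq _ => p ps; rewrite !inE sE //= andbT.
by rewrite negb_and -ltnNge -leqNgt; apply: s_out.
Qed.

Definition defect (D : diagram) (d : nat) : nat := #|` D| - numin D d.

(* The first column avoids the cells counted by [nu E d d.-1], the first row
   those counted by [nu E d 0]. *)
Lemma of_order_defect E d :
  ferrers E -> (1 < d)%N -> of_order (defect E d) E.
Proof.
rewrite /defect; move=> [E_pos E_down] lt1d [a b] pE /=; have /= [a_gt0 b_gt0] := E_pos _ pE.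
split.
- have /leq_sub2l le_numin := @numin_le_nu E d d.-1 ltac:(lia).
  apply: leq_trans (le_numin _); rewrite -(size_iota 1 a) -(size_map (pair^~ 1%N)).
  apply: size_le_card_sub_nu; first by rewrite map_inj_uniq ?iota_uniq // => u v [].
    by move=> _ /mapP[k + ->]; rewrite mem_iota => k_range; apply: (E_down _ pE) => /=; lia.
  by move=> _ /mapP[k _ ->] /=; lia.
- have /leq_sub2l le_numin := @numin_le_nu E d 0 (ltnW lt1d).
  apply: leq_trans (le_numin _); rewrite -(size_iota 1 b) -(size_map (pair 1%N)).
  apply: size_le_card_sub_nu; first by rewrite map_inj_uniq ?iota_uniq // => u v [].
    by move=> _ /mapP[k + ->]; rewrite mem_iota => k_range; apply: (E_down _ pE) => /=; lia.
  by move=> _ /mapP[k _ ->] /=; lia.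
Qed.

Lemma card_le_sq E n : ferrers E -> of_order n E -> (#|` E| <= n * n)%N.
Proof.
move=> [E_pos _] oE; rewrite -{1 2}(size_iota 1 n) -(size_allpairs pair).
apply: uniq_leq_size (fset_uniq E) _ => -[a b] pE; apply/allpairsP; exists (a, b).
by rewrite !mem_iota /=; have := E_pos _ pE; have := oE _ pE => /= [[? ?] [? ?]]; split => //; lia.
Qed.

Lemma numin_fsetD1_neq D P d :
  numin (D `\ P) d != numin D d -> numin D d = (numin (D `\ P) d).+1.
Proof.
have := numin_subset d (fsubD1set D P); have := numin_fsetD1 D P d; lia.
Qed.

Lemma defect_fsetD1_same_numin D P d : P \in D -> (0 < d)%N ->
  numin (D `\ P) d = numin D d -> (defect (D `\ P) d < defect D d)%N.
Proof.
move=> PD d_gt0 same; have := numin_le_card (D `\ P) d_gt0.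
by rewrite /defect same (cardfsD1 P D) PD; lia.
Qed.

Lemma defect_fsetD1_succ_numin D P d : P \in D ->
  numin D d = (numin (D `\ P) d).+1 -> defect (D `\ P) d = defect D d.
Proof. by move=> PD grow; rewrite /defect grow (cardfsD1 P D) PD; lia. Qed.

Definition has_mfd_code (F : fieldType) N D d :=
  exists C : {vspace 'M[F]_N}, is_code D (numin D d) d C.

Section CodeConstructions.
Variable F : fieldType.
Local Open Scope ring_scope.

Lemma exists_subv_dim (vT : vectType F) (V : {vspace vT}) k :
  (k <= \dim V)%N -> exists2 W : {vspace vT}, (W <= V)%VS & \dim W = k.
Proof.
move=> le_kV; have freeV : free (vbasis V) := basis_free (vbasisP V).
have freeW : free (take k (vbasis V)).
  by apply: (@catl_free _ _ (drop k (vbasis V))); rewrite cat_take_drop.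
exists <<take k (vbasis V)>>%VS.
  by apply/span_subvP => v /mem_take; apply: vbasis_mem.
by rewrite (eqP freeW) size_take size_tuple; case: ltngtP le_kV => // ->.
Qed.

Lemma point_ordinal N (P : nat * nat) : (0 < P.1 <= N)%N -> (0 < P.2 <= N)%N ->
  exists i j : 'I_N, P = (i.+1, j.+1).
Proof.
by case: P => [[|a] [|b]] //= lt_aN lt_bN; exists (Ordinal lt_aN), (Ordinal lt_bN).
Qed.

Lemma is_code_fsubset N (D E : diagram) k d (C : {vspace 'M[F]_N}) :
  D `<=` E -> is_code D k d C -> is_code E k d C.
Proof.
move=> /fsubsetP sDE [dimC [suppC rankC]]; split=> //; split=> // M MC i j Eij.
by apply: (suppC M MC); apply: contra Eij => /sDE.
Qed.

Lemma is_code_fsetD1 N D P k d (C : {vspace 'M[F]_N}) :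
  (0 < P.1 <= N)%N -> (0 < P.2 <= N)%N -> is_code D k.+1 d C ->
  exists C' : {vspace 'M[F]_N}, is_code (D `\ P) k d C'.
Proof.
move=> P1 P2 [dimC [suppC rankC]]; have [i [j ->]] := point_ordinal P1 P2.
pose entry : 'Hom('M[F]_N, 'M[F]_1) := linfun (mxsub (fun=> i) (fun=> j)).
have entry0 M : entry M = 0 -> M i j = 0.
  by rewrite lfunE => /matrixP/(_ 0 0); rewrite !mxE.
have /exists_subv_dim[C' sC' dimC'] : (k <= \dim (C :&: lker entry))%N.
  have : (\dim (entry @: C) <= 1)%N.
    by rewrite (leq_trans (dimvS (subvf _))) // dimvf dim_matrix.
  have := limg_ker_dim entry C; rewrite dimC; move: (\dim _) (\dim _) => x y; lia.
exists C'; split=> //; split=> M /(subvP sC'); rewrite memv_cap => /andP[MC]; last first.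
  by move=> _; apply: rankC.
rewrite memv_ker => /eqP/entry0 Mij a b; rewrite in_fsetD1 negb_and negbK.
case/orP=> [/eqP eq_ab | Dab]; last exact: suppC.
by have [-> ->] : a = i /\ b = j by case: eq_ab => a_i b_j; split; apply: val_inj.
Qed.

Lemma mxrank_rowsub_onto m m' n (f : 'I_m' -> 'I_m) (A : 'M[F]_(m, n)) :
  (forall i, row i A != 0 -> exists k, f k = i) -> \rank (rowsub f A) = \rank A.
Proof.
move=> onto; apply/eqP; rewrite eqn_leq mxrankS ?rowsub_sub //=.
apply/mxrankS/row_subP => i; have [->|/onto[k <-]] := eqVneq (row i A) 0.
  exact: sub0mx.
by rewrite -row_rowsub row_sub.
Qed.

Lemma mxrank_mxsub_widen n N (le_nN : (n <= N)%N) (M : 'M[F]_N) :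
  (forall i j : 'I_N, (n <= i)%N || (n <= j)%N -> M i j = 0) ->
  \rank (mxsub (widen_ord le_nN) (widen_ord le_nN) M) = \rank M.
Proof.
move=> M_out.
have onto m (A : 'M[F]_(N, m)) : (forall (i : 'I_N) j, (n <= i)%N -> A i j = 0) ->
    forall i, row i A != 0 -> exists k, widen_ord le_nN k = i.
  move=> A_out i nzAi; have lt_in : (i < n)%N.
    by rewrite ltnNge; apply: contra nzAi => le_ni; apply/eqP/rowP => j; rewrite !mxE A_out.
  by exists (Ordinal lt_in); apply: val_inj.
rewrite mxsubcr -mxrank_tr trmx_mxsub mxrank_rowsub_onto; last first.
  by apply: onto => i j le_ni; rewrite !mxE M_out // le_ni orbT.
by rewrite mxrank_tr mxrank_rowsub_onto //; apply: onto => i j le_ni; rewrite M_out ?le_ni.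
Qed.

Lemma is_code_shrink n N D k d (C : {vspace 'M[F]_N}) :
  (n <= N)%N -> of_order n D -> is_code D k d C ->
  exists C' : {vspace 'M[F]_n}, is_code D k d C'.
Proof.
move=> le_nN oD [dimC [suppC rankC]].
pose shrink : 'Hom('M[F]_N, 'M[F]_n) := linfun (mxsub (widen_ord le_nN) (widen_ord le_nN)).
have rank_shrink M : M \in C -> \rank (shrink M) = \rank M.
  move=> MC; rewrite lfunE mxrank_mxsub_widen // => i j out_ij.
  by apply: (suppC M MC); apply/negP => /oD /= [le_in le_jn]; case/orP: out_ij; lia.
exists (shrink @: C)%VS; split; [|split].
- rewrite limg_dim_eq //; apply/eqP; rewrite -subv0; apply/subvP => M.
  rewrite memv_cap memv_ker memv0 => /andP[MC /eqP shrinkM0].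
  by rewrite -mxrank_eq0 -rank_shrink // shrinkM0 mxrank0.
- by move=> _ /memv_imgP[M MC ->] i j Dij; rewrite lfunE mxE; apply: suppC.
- move=> _ /memv_imgP[M MC ->]; rewrite -mxrank_eq0 rank_shrink // mxrank_eq0.
  exact: rankC.
Qed.

Lemma supported_vspace N (S : diagram) :
  (forall p, p \in S -> (0 < p.1 <= N)%N /\ (0 < p.2 <= N)%N) ->
  exists V : {vspace 'M[F]_N}, \dim V = #|` S| /\ (forall M, M \in V -> supported_in S M).
Proof.
elim/fset1U_rect: S => [_|P S P_S IHS S_range].
  exists 0%VS; rewrite dimv0 cardfs0; split=> // M.
  by rewrite memv0 => /eqP-> i j _; rewrite mxE.
have [|V [dimV suppV]] := IHS.
  by move=> p pS; apply: S_range; rewrite fset1Ur.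
have [P1 P2] := S_range P (fset1U1 P S); have [i [j eP]] := point_ordinal P1 P2.
have Vij0 M : M \in V -> M i j = 0 by move=> MV; apply: (suppV M MV); rewrite -eP.
have delta_neq0 : delta_mx i j != 0 :> 'M[F]_N.
  by apply/eqP => /matrixP/(_ i j); rewrite !mxE !eqxx; apply/eqP/oner_neq0.
exists (V + <[delta_mx i j]>)%VS; split.
  rewrite dimv_disjoint_sum ?dim_vline ?delta_neq0 ?dimV ?cardfsU1 ?P_S ?addn1 //.
  apply/eqP; rewrite -subv0; apply/subvP => M; rewrite memv_cap memv0.
  case/andP=> /Vij0 Mij /vlineP[c eM]; move: Mij; rewrite eM !mxE !eqxx mulr1 => ->.
  by rewrite scale0r.
move=> _ /memv_addP[M MV [_ /vlineP[c ->] ->]] a b; rewrite in_fset1U negb_or.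
case/andP=> neq_ab Sab; rewrite !mxE (suppV M MV a b Sab) add0r.
case: (a =P i) => [a_i|_]; last by rewrite mulr0.
case: (b =P j) => [b_j|_]; last by rewrite andbF mulr0.
by rewrite eP a_i b_j eqxx in neq_ab.
Qed.

Lemma has_mfd_code_d1 n D : ferrers D -> of_order n D -> has_mfd_code F n D 1.
Proof.
move=> fD oD; have [|V [dimV suppV]] := @supported_vspace n D.
  by move=> p pD; have [-> ->] := fD.1 p pD; have [-> ->] := oD p pD.
by exists V; split; [rewrite numin1 | split=> // M _; rewrite lt0n mxrank_eq0].
Qed.

End CodeConstructions.

Section CodesFromIrreducibleCodes.
Variables (F : fieldType) (d N : nat).
Hypothesis lt1d : (1 < d)%N.
Hypothesis irreducible_codes :
  forall D, ferrers D -> of_order N D -> irreducible D d -> has_mfd_code F N D d.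

Lemma has_mfd_code_of_defect_eq c : (c <= N)%N ->
  (forall D, ferrers D -> (defect D d < c)%N -> has_mfd_code F N D d) ->
  forall D, ferrers D -> defect D d = c -> has_mfd_code F N D d.
Proof.
(* By [card_le_sq], c * c - #|` D| drops when a cell is added at the same defect. *)
move=> le_cN IHc D fD defD; have [t] := ubnP (c * c - #|` D|).
elim: t D fD defD => // t IHt D fD defD; rewrite ltnS => le_t.
have [[D' [fD' arrowD'D]]|irrD] := classic (reducible D d); last first.
  apply: irreducible_codes => // p pD; have := of_order_defect fD lt1d pD.
  by rewrite defD => -[le_1 le_2]; split; apply: leq_trans le_cN.
case: arrowD'D => [[P [[PD _] [eD' same]]] | [P [[PD' _] [eD neq]]]].
- subst D'; have lt_defect : (defect (D `\ P) d < c)%N.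
    by rewrite -defD; apply: defect_fsetD1_same_numin PD (ltnW lt1d) same.
  have [C codeC] := IHc _ fD' lt_defect.
  by exists C; rewrite -same; apply: is_code_fsubset codeC; apply: fsubD1set.
- subst D; have grow := numin_fsetD1_neq (introN eqP neq).
  have defD' : defect D' d = c by rewrite -defD defect_fsetD1_succ_numin.
  have D'_order := of_order_defect fD' lt1d; rewrite defD' in D'_order.
  have [C codeC] : has_mfd_code F N D' d.
    apply: (IHt D' fD' defD'); have := card_le_sq fD' D'_order.
    by move: le_t; rewrite (cardfsD1 P D') PD'; lia.
  have [P1 P2] := fD'.1 P PD'; have [P1N P2N] := D'_order P PD'.
  by rewrite grow in codeC; apply: is_code_fsetD1 codeC; rewrite ?P1 ?P2 /=; apply: leq_trans le_cN.
Qed.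

Lemma has_mfd_code_of_defect_le D : ferrers D -> (defect D d <= N)%N ->
  has_mfd_code F N D d.
Proof.
move defD: (defect D d) => c fD le_cN.
elim/ltn_ind: c D fD defD le_cN => c IHc D fD defD le_cN.
apply: (has_mfd_code_of_defect_eq le_cN _ fD defD) => D' fD' lt_c.
exact: IHc fD' (erefl _) (leq_trans (ltnW lt_c) le_cN).
Qed.

End CodesFromIrreducibleCodes.

Theorem theorem3p14 :
  (forall (n : nat) (D : diagram) (d : nat) (F : finFieldType),
      ferrers D -> of_order n D -> (0 < d)%N ->
      exists C : {vspace 'M[F]_n}, is_code D (numin D d) d C)
  <->
  (forall (n : nat) (D : diagram) (d : nat) (F : finFieldType),
      ferrers D -> of_order n D -> (0 < d)%N -> irreducible D d ->
      exists C : {vspace 'M[F]_n}, is_code D (numin D d) d C).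
Proof.
split=> [all_codes n D d F fD oD d_gt0 _ | irr_codes n D d F fD oD d_gt0].
  exact: all_codes.
have [le_d1|lt1d] := leqP d 1.
  have -> : d = 1%N by apply/eqP; rewrite eqn_leq le_d1.
  exact: has_mfd_code_d1.
pose N := maxn n (defect D d).
have irr_codes_N D' : ferrers D' -> of_order N D' -> irreducible D' d -> has_mfd_code F N D' d.
  by move=> fD' oD'; apply: irr_codes.
have [C codeC] := has_mfd_code_of_defect_le lt1d irr_codes_N fD (leq_maxr _ _).
exact: is_code_shrink (leq_maxl _ _) oD codeC.
Qed.
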